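(* A semiregular topological space $X$ is point-rotund if and only if $X$ is completely regular.
   Context: A topological space $X$ is semiregular if for every $x\in X$ and neighborhood $O_x$ of $x$ there is a neighborhood $U_x$ of $x$ with $\mathrm{int}\,\mathrm{cl}(U_x)\subset O_x$; completely regular if for every $x$ and neighborhood $O_x$ there is a continuous $f:X\to[0,1]$ with $f(x)=0$ and $f^{-1}([0,1))\subset O_x$ (no $T_1$ assumed in either). Entourages: subsets of $X\times X$ containing the diagonal; $U\circ V=\{(x,z):\exists y\,((x,y)\in U,(y,z)\in V)\}$; $B(x;U)=\{y:(x,y)\in U\}$. A quasi-uniformity is a family $\mathcal U$ of entourages closed under supersets, with any two members containing a common member and each $U\in\mathcal U$ containing $V\circ V$ for some $V\in\mathcal U$; it generates the topology in which $W$ is open iff each $x\in W$ has $B(x;U)\subset W$ for some $U\in\mathcal U$. A base $\mathcal B$ of $\mathcal U$ is multiplicative if closed under $\circ$, and point-rotund if $\overline{B(x;V)}\subset\mathrm{int}\,\overline{B(x;V\circ U)}$ for all $x$ and $U,V\in\mathcal B$ (closures/interiors in the generated topology). A topological space is point-rotund if its topology is generated by a quasi-uniformity having a point-rotund multiplicative base. *)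

From HB Require Import structures.
From mathcomp Require Import all_boot all_order all_algebra.
From mathcomp Require Import all_classical all_reals all_analysis.
Set Implicit Arguments. Unset Strict Implicit. Unset Printing Implicit Defensive.
Import Order.TTheory GRing.Theory Num.Theory numFieldNormedType.Exports.
Local Open Scope classical_set_scope.
Local Open Scope ring_scope.

Section Defs.
Variable X : topologicalType.

Definition semiregular : Prop :=
  forall (x : X) (O : set X), nbhs x O ->
    exists U : set X, nbhs x U /\ interior (closure U) `<=` O.

Definition qcomp (U V : set (X * X)) : set (X * X) :=
  [set p | exists y, U (p.1, y) /\ V (y, p.2)].

Definition qball (x : X) (U : set (X * X)) : set X := [set y | U (x, y)].

Definition quasi_uniformity (QU : set (set (X * X))) : Prop :=
  [/\ exists U, QU U,
      forall U, QU U -> forall x, U (x, x),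
      forall U V, QU U -> U `<=` V -> QU V,
      forall U V, QU U -> QU V -> exists W, QU W /\ W `<=` U `&` V &
      forall U, QU U -> exists V, QU V /\ qcomp V V `<=` U].

Definition qu_open (QU : set (set (X * X))) (W : set X) : Prop :=
  forall x, W x -> exists U, QU U /\ qball x U `<=` W.

Definition generates_topology (QU : set (set (X * X))) : Prop :=
  forall W : set X, open W <-> qu_open QU W.

Definition qu_base (B QU : set (set (X * X))) : Prop :=
  B `<=` QU /\ forall U, QU U -> exists V, B V /\ V `<=` U.

Definition multiplicative (B : set (set (X * X))) : Prop :=
  forall U V, B U -> B V -> B (qcomp U V).

Definition point_rotund_base (B : set (set (X * X))) : Prop :=
  forall (x : X) U V, B U -> B V ->
    closure (qball x V) `<=` interior (closure (qball x (qcomp V U))).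

Definition point_rotund : Prop :=
  exists QU : set (set (X * X)),
    [/\ quasi_uniformity QU, generates_topology QU &
        exists B, [/\ qu_base B QU, multiplicative B & point_rotund_base B]].

Definition completely_regular (R : realType) : Prop :=
  forall (x : X) (O : set X), nbhs x O ->
    exists f : X -> R,
      [/\ continuous f, forall y, 0 <= f y <= 1, f x = 0 &
          f @^-1` [set r | r < 1] `<=` O].
End Defs.

From Pilot Require Import Defs.
From HB Require Import structures.
From mathcomp Require Import all_boot all_order all_algebra.
From mathcomp Require Import all_classical all_reals all_analysis.
Set Implicit Arguments. Unset Strict Implicit. Unset Printing Implicit Defensive.
Import Order.TTheory GRing.Theory Num.Theory numFieldNormedType.Exports.
Local Open Scope classical_set_scope.
Local Open Scope ring_scope.

(* Given a neighbourhood O of x, semiregularity yields a ball B(x;V o V)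
   with int cl B(x;V o V) inside O.  Point-rotundity,
   cl B(x;V) <= int cl B(x;V o U), together with the splitting of base
   entourages U' o U' <= U, produces between B(x;V) and int cl B(x;V o V) a
   family of pairs L <= cl L <= R that can always be interpolated.  As in
   Urysohn's lemma for normal spaces, such a family generates a uniformity,
   coarser than the topology, in which x is uniformly separated from the
   complement of O; its gauge pseudometric gives the separating function.
   Conversely, a completely regular space carries a compatible uniformity,
   and in any uniform space the entourages form a point-rotund multiplicative
   base because cl B(x;V) <= int B(x;V o U). *)

Section subbase_uniformity.
Local Open Scope relation_scope.
Context {T : topologicalType} (S : set_system (T * T)).
Hypothesis S_refl : forall E, S E -> diagonal `<=` E.
Hypothesis S_inv : forall E, S E -> S E^-1.
Hypothesis S_split : forall E, S E ->
  exists2 K, smallest Filter S K & K \; K `<=` E.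
Hypothesis S_near : forall E x, S E -> \forall y \near x, E (x, y).

Local Notation ent := (smallest Filter S).

Let ent_refl E : ent E -> diagonal `<=` E.
Proof. by apply; split; [exact: globally_filter | exact: S_refl]. Qed.

Let ent_inv : forall E, ent E -> ent E^-1.
Proof.
have inv_filter : Filter [set E | ent E^-1].
  constructor => [|P Q|P Q PQ] /=; first exact: filterT.
    exact: filterI.
  exact: filterS (fun xy => @PQ (xy.2, xy.1)).
by apply: (smallest_sub inv_filter) => F SF; exact: sub_gen_smallest (S_inv SF).
Qed.

Let ent_split_iter n E : filterI_iter S n E ->
  exists2 K, ent K & K \; K `<=` E.
Proof.
elim: n E => [E [->|/S_split//]|n IH E].
  by exists setT; [exact: (@filterT _ (smallest Filter S)) | ].
move=> [P /IH [K1 ent1 sub1] [Q /IH [K2 ent2 sub2] <-]].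
exists (K1 `&` K2); first exact: filterI ent1 ent2.
move=> [x z] [y [K1xy K2xy] [K1yz K2yz]].
by split; [apply: sub1 | apply: sub2]; exists y.
Qed.

Let ent_split E : ent E -> exists2 K, ent K & K \; K `<=` E.
Proof.
rewrite {1}filterI_iterE => -[F [n _ /ent_split_iter [K entK KF]] FE].
by exists K => //; apply: subset_trans FE.
Qed.

Definition subbase_uniformType : Type := T.

HB.instance Definition _ := Choice.on subbase_uniformType.

HB.instance Definition _ := isUniform.Build subbase_uniformType
  (smallest_filter_filter S) ent_refl ent_inv ent_split.

Lemma subbase_uniform_separator (A B : set T) E :
  S E -> A `*` B `&` E = set0 -> uniform_separator A B.
Proof.
move=> SE ABE; exists (Uniform.class subbase_uniformType), E.
split => //; first exact: (sub_gen_smallest (C := Filter) SE).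
have near_filter :
    Filter [set F : set (T * T) | forall x, \forall y \near x, F (x, y)].
  constructor => [x|P Q + + x|P Q PQ + x]; first exact: filterT.
    by move=> /(_ x) nP /(_ x) nQ; apply: filterI.
  by move=> /(_ x); apply: filterS => y /PQ.
have near_ent : ent `<=` [set F | forall x, \forall y \near x, F (x, y)].
  by apply: smallest_sub near_filter _ => F SF x; exact: S_near.
move=> x U [F /near_ent /(_ x) nearF /filterS]; apply.
by apply: filterS nearF => y Fxy; apply/xsectionP.
Qed.

End subbase_uniformity.

Section interpolating_pairs.
Local Open Scope relation_scope.
Context {T : topologicalType} (interp : set T * set T -> Prop).
Hypothesis interp_open : forall L R, interp (L, R) -> open R.
Hypothesis interp_closure : forall L R, interp (L, R) -> closure L `<=` R.
Hypothesis interp_split : forall L R, interp (L, R) ->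
  exists R', interp (L, R') /\ interp (R', R).

(* [apx (L, R)] relates a and b unless one lies in [closure L] and the
   other outside [R]; interpolation makes these a subbase of a uniformity. *)
Let apx (LR : set T * set T) : set (T * T) :=
  [set ab | (closure LR.1 ab.1 -> LR.2 ab.2) /\
            (closure LR.1 ab.2 -> LR.2 ab.1)].

Let apx_refl L R : interp (L, R) -> diagonal `<=` apx (L, R).
Proof. by move=> /interp_closure LR [x _ /diagonalP <-]; split => /LR. Qed.

Let apx_inv LR : (apx LR)^-1 = apx LR.
Proof. by apply/seteqP; split => -[x y] [? ?]; split. Qed.

Let apx_split L R : interp (L, R) ->
  exists2 K, smallest Filter (apx @` interp) K & K \; K `<=` apx (L, R).
Proof.
move=> /interp_split [R' [iLR' iR'R]].
have [ent1 ent2] : smallest Filter (apx @` interp) (apx (L, R')) /\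
                   smallest Filter (apx @` interp) (apx (R', R)).
  by split; apply: sub_gen_smallest; [exists (L, R') | exists (R', R)].
exists (apx (L, R') `&` apx (R', R)); first exact: filterI ent1 ent2.
move=> [x z] [y [[/= Lx_R'y _] [/= _ R'y_Rx]]].
move=> [[/= _ Lz_R'y] [/= R'y_Rz _]]; split => /=.
  by move=> /Lx_R'y /subset_closure /R'y_Rz.
by move=> /Lz_R'y /subset_closure /R'y_Rx.
Qed.

Let apx_near L R x : interp (L, R) -> \forall y \near x, apx (L, R) (x, y).
Proof.
move=> iLR; have oR := interp_open iLR; have LR := interp_closure iLR.
have [Rx|nRx] := pselect (R x).
  by apply: filterS (open_nbhs_nbhs (conj oR Rx)) => y Ry; split => // _.
have nLx : ~ closure L x by move/LR.
have oNL : open (~` closure L) by exact/closed_openC/closed_closure.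
by apply: filterS (open_nbhs_nbhs (conj oNL nLx)) => y nLy; split.
Qed.

Lemma interpolating_uniform_separator (A B : set T) L R :
  interp (L, R) -> A `<=` L -> B `<=` ~` R -> uniform_separator A B.
Proof.
move=> iLR AL BR.
apply: (@subbase_uniform_separator _ (apx @` interp) _ _ _ _ _ _ (apx (L, R)));
  last 2 first.
- by exists (L, R).
- apply/seteqP; split => // -[a b] [[/= Aa Bb] [/= + _]].
  by move=> /(_ (subset_closure (AL _ Aa))); exact: BR.
- by move=> _ [[L' R'] iLR' <-]; exact: apx_refl.
- by move=> _ [[L' R'] iLR' <-]; rewrite apx_inv; exists (L', R').
- by move=> _ [[L' R'] iLR' <-]; exact: apx_split.
- by move=> _ y [[L' R'] iLR' <-]; exact: apx_near.
Qed.

End interpolating_pairs.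

Lemma qcompS (X : topologicalType) (U U' V V' : set (X * X)) :
  U `<=` U' -> V `<=` V' -> qcomp U V `<=` qcomp U' V'.
Proof. by move=> UU' VV' [a b] [y [/UU' ? /VV' ?]]; exists y. Qed.

Section rotund_pairs.
Variables (X : topologicalType) (QU B : set (set (X * X))) (x : X).
Hypothesis QU_quasi : quasi_uniformity QU.
Hypothesis B_base : qu_base B QU.
Hypothesis B_mul : Defs.multiplicative B.
Hypothesis B_rotund : point_rotund_base B.

Lemma qu_base_split U : QU U -> exists2 V, B V & qcomp V V `<=` U.
Proof.
have [_ _ _ _ QU_split] := QU_quasi; have [_ B_refine] := B_base.
move=> /QU_split [W [/B_refine [V [BV VW] WWU]]].
by exists V => //; apply: subset_trans WWU; exact: qcompS.
Qed.

Definition rotund_pair (LR : set X * set X) : Prop :=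
  exists V U, [/\ B V, B U, LR.1 `<=` closure (qball x V),
    interior (closure (qball x (qcomp V U))) `<=` LR.2 & open LR.2].

Lemma rotund_pair_closure L R : rotund_pair (L, R) -> closure L `<=` R.
Proof.
move=> [V [U [BV BU /= LV VUR _]]] y /(closureS LV) /closed_closure.
by move=> /(B_rotund BU BV) /VUR.
Qed.

Lemma rotund_pair_split L R : rotund_pair (L, R) ->
  exists R', rotund_pair (L, R') /\ rotund_pair (R', R).
Proof.
move=> [V [U [BV BU /= LV VUR oR]]].
have [B_QU _] := B_base; have [U' BU' U'U] := qu_base_split (B_QU U BU).
exists (interior (closure (qball x (qcomp V U')))); split.
  by exists V, U'; split => //; exact: open_interior.
exists (qcomp V U'), U'; split => //=; first exact: B_mul.
  exact: interior_subset.
apply: subset_trans VUR; apply/interiorS/closureS.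
move=> y [z [[w [Vxw U'wz]] U'zy]].
by exists w; split => //; apply: U'U; exists z.
Qed.

End rotund_pairs.

Lemma point_rotund_separator (X : topologicalType) (x : X) (O : set X) :
  semiregular X -> point_rotund X -> nbhs x O ->
  uniform_separator [set x] (~` O).
Proof.
move=> srX [QU [QU_quasi QU_gen [B [B_base B_mul B_rotund]]]] Ox.
have [U0 [+ U0O]] := srX x O Ox; rewrite nbhsE => -[W [oW Wx] WU0].
have [E [QE EW]] := (QU_gen W).1 oW x Wx.
have [V BV VVE] := qu_base_split QU_quasi B_base QE.
apply: (@interpolating_uniform_separator _ (rotund_pair B x) _ _ _ _ _
  (qball x V) (interior (closure (qball x (qcomp V V))))).
- by move=> L R [? [? [_ _ _ _ ]]].
- exact: rotund_pair_closure B_rotund.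
- exact: rotund_pair_split QU_quasi B_base B_mul.
- by exists V, V; split => //; [exact: subset_closure | exact: open_interior].
- have [_ QU_refl _ _ _] := QU_quasi; have [B_QU _] := B_base.
  by move=> _ ->; exact: QU_refl (B_QU _ BV) x.
- apply: subsetC; apply: subset_trans U0O; apply/interiorS/closureS.
  by move=> y /VVE /EW /WU0.
Qed.

Section completely_regular_separators.
Context (R : realType) (X : topologicalType).

Lemma completely_regularP : completely_regular X R <->
  forall (x : X) O, nbhs x O -> uniform_separator [set x] (~` O).
Proof.
split=> [crX x O Ox | sepX x O Ox].
  have [f [cf f01 fx0 fO]] := crX x O Ox; apply/(@uniform_separatorP _ R).
  exists f; split => //.
  - by move=> _ [y _ <-]; rewrite /= in_itv; exact: f01.
  - by move=> _ [y -> <-].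
  move=> _ [y nOy <-] /=; apply/eqP; rewrite eq_le; have /andP[_ ->] := f01 y.
  by rewrite leNgt; apply/negP => /fO.
have [f [cf f01 fx0 fO1]] := (@uniform_separatorP _ R _ _).1 (sepX x O Ox).
exists f; split => //.
- by move=> y; have := f01 (f y) (ex_intro2 _ _ y I erefl); rewrite /= in_itv.
- by apply: fx0; exists x.
- move=> y /= fy1; apply: contrapT => nOy.
  by have := fO1 _ (ex_intro2 _ _ y nOy erefl) => /= fy; rewrite fy ltxx in fy1.
Qed.

Lemma completely_regular_space_of : completely_regular X R ->
  completely_regular_space X.
Proof.
move=> /completely_regularP sepX x B clB nBx; rewrite -(setCK B).
by apply: sepX; apply: open_nbhs_nbhs; split => //; exact: closed_openC.
Qed.

End completely_regular_separators.

Section uniform_point_rotund.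
Context {Y : uniformType}.

Lemma entourage_quasi_uniformity : quasi_uniformity (@entourage Y).
Proof.
split.
- by exists setT; exact: entourageT.
- by move=> U entU y; exact: entourage_refl.
- by move=> U V entU UV; exact: filterS UV entU.
- by move=> U V entU entV; exists (U `&` V); split => //; exact: filterI.
move=> U entU; have [W entW WWU] := entourage_split_ex entU.
by exists W; split => // -[a b] [y [Way Wyb]]; apply: WWU; exists y.
Qed.

Lemma entourage_generates_topology : generates_topology (@entourage Y).
Proof.
move=> W; rewrite openE /interior -nbhs_entourageE; split.
  move=> oW y /oW [E entE EW]; exists E; split => // z Eyz.
  exact/EW/xsectionP.
by move=> oW y /oW [E [entE EW]]; exists E => // z /xsectionP /EW.
Qed.

Lemma entourage_multiplicative : Defs.multiplicative (@entourage Y).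
Proof.
move=> U V entU entV; apply: filterS entU => -[a b] Uab.
by exists b; split => //; exact: entourage_refl.
Qed.

Lemma entourage_point_rotund_base : point_rotund_base (@entourage Y).
Proof.
move=> x U V entU entV y clVy.
change (nbhs y (closure (qball x (qcomp V U)))).
apply: filterS (@subset_closure _ _) _.
pose W := split_ent U; pose W' := W `&` W^-1%relation.
have entW' : entourage W' by apply: filterI; [|apply: entourage_inv];
  exact: entourage_split_ent.
have nbhsW' := nbhs_entourage y entW'.
have [a [Vxa /xsectionP [_ Way]]] := clVy _ nbhsW'.
apply: filterS nbhsW' => z /xsectionP [Wyz _].
by exists a; split => //; exact: (entourage_split y entU Way Wyz).
Qed.

Lemma uniform_point_rotund : point_rotund Y.
Proof.
exists entourage; split.
- exact: entourage_quasi_uniformity.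
- exact: @entourage_generates_topology.
exists entourage; split.
- by split => [E entE // | U entU]; exists U; split.
- exact: @entourage_multiplicative.
- exact: @entourage_point_rotund_base.
Qed.

End uniform_point_rotund.

Theorem corollary4p3 (R : realType) (X : topologicalType) :
  semiregular X -> (point_rotund X <-> completely_regular X R).
Proof.
move=> srX; split => [prX | crX].
  by apply/completely_regularP => x O; exact: point_rotund_separator.
exact: (@uniform_point_rotund
  (@completely_regular_uniformity.type R X (completely_regular_space_of crX))).
Qed.
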